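(* Define integer matrices $(a(i,j))_{i,j\ge1}$ and $(b(i,j))_{i,j\ge1}$ as follows. The first three rows are (entries listed for $j=1,2,\dots$; all further entries in these rows are $0$): \begin{itemize} \item $a(1,\cdot)=(10,-36,27)$; $a(2,\cdot)=(-8,306,-2160,5508,-5832,2187)$; $a(3,\cdot)=(1,-360,10566,-99144,423549,-944784,1141614,-708588,177147)$; \item $b(1,\cdot)=(-9,252,-891,729)$; $b(2,\cdot)=(1,-378,8613,-54675,138510,-150903,59049)$; $b(3,\cdot)=(0,147,-14553,312255,-2617839,10764414,-23914845,29288304,-18600435,4782969)$. \end{itemize} For $i\ge4$ and $j\ge1$, both $m=a$ and $m=b$ satisfy $$m(i,j)=30m(i-1,j-1)-108m(i-1,j-2)+81m(i-1,j-3)-12m(i-2,j-1)+9m(i-2,j-2)+m(i-3,j-1),$$ with $m(i,j)=0$ whenever $j\le0$. Let $t(i,j)=\sum_{k\ge1}a(i,k)b(k,j)$ for $i,j\ge1$ (a finite sum). Then for all $i,j\ge1$, $$\pi(t(i,j))\ge\min_{k\ge1}\{\pi(a(i,k))+\pi(b(k,j))\}\ge\min_{k\ge1}\left\{\left\lfloor\frac{3k-i-1}{2}\right\rfloor+\left\lfloor\frac{3j-k}{2}\right\rfloor\right\}.$$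
   Context: For an integer $n$, $\pi(n)$ denotes the $3$-adic order of $n$, with the convention $\pi(0)=\infty$. $\lfloor x\rfloor$ is the largest integer not exceeding $x$. *)

From Stdlib Require Import ZArith List.
From mathcomp Require prime.
Import ListNotations.
Open Scope Z_scope.

Definition row_of_list (l : list Z) : Z -> Z :=
  fun j => if j <=? 0 then 0 else nth (Z.to_nat (j - 1)) l 0.

Definition step (m3 m2 m1 : Z -> Z) : Z -> Z :=
  fun j => if j <=? 0 then 0 else
    30 * m1 (j - 1) - 108 * m1 (j - 2) + 81 * m1 (j - 3)
    - 12 * m2 (j - 1) + 9 * m2 (j - 2) + m3 (j - 1).

Definition shift (r : (Z -> Z) * (Z -> Z) * (Z -> Z)) :=
  let '(x, y, z) := r in (y, z, step x y z).

Definition mrow (r1 r2 r3 : Z -> Z) (i : nat) : Z -> Z :=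
  let '(x, _, _) := Nat.iter (i - 1) shift (r1, r2, r3) in x.

Definition a (i j : nat) : Z :=
  mrow (row_of_list [10; -36; 27])
       (row_of_list [-8; 306; -2160; 5508; -5832; 2187])
       (row_of_list [1; -360; 10566; -99144; 423549; -944784; 1141614; -708588; 177147])
       i (Z.of_nat j).

Definition b (i j : nat) : Z :=
  mrow (row_of_list [-9; 252; -891; 729])
       (row_of_list [1; -378; 8613; -54675; 138510; -150903; 59049])
       (row_of_list [0; 147; -14553; 312255; -2617839; 10764414; -23914845;
                     29288304; -18600435; 4782969])
       i (Z.of_nat j).

(* t(i,j) = sum_{k=1}^{N} a(i,k) b(k,j); equals the paper's sum whenever
   a(i,k) = 0 for all k > N. *)
Definition tN (N i j : nat) : Z :=
  fold_right Z.add 0 (map (fun k => a i k * b k j) (seq 1 N)).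

(* Extended integers Z ∪ {+oo}: None = +oo. *)
Definition ele (x y : option Z) : Prop :=
  match x, y with
  | _, None => True
  | None, Some _ => False
  | Some x, Some y => x <= y
  end.

Definition eadd (x y : option Z) : option Z :=
  match x, y with
  | Some x, Some y => Some (x + y)
  | _, _ => None
  end.

Definition pi3 (n : Z) : option Z :=
  if n =? 0 then None else Some (Z.of_nat (prime.logn 3 (Z.abs_nat n))).

Definition IsMinOver (f : nat -> option Z) (m : option Z) : Prop :=
  (exists k, (1 <= k)%nat /\ f k = m) /\
  (forall k, (1 <= k)%nat -> ele m (f k)).

(* Both matrices are banded with a 3-adic slope.  A term c * m(i-s, k-t) of
   the recurrence always has 2 pi(c) >= 3t - s, so the lower bounds
   pi(a(i,k)) >= floor((3k-i-1)/2) and pi(b(k,j)) >= floor((3j-k)/2), checked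
   on the first three rows, propagate to every row; likewise a(i,k) = 0 for
   k > 3i, which makes t(i,j) a finite sum.  The first inequality is then the
   ultrametric inequality for pi, and the second follows from the row bounds,
   the right-hand minimum being attained at k = 1. *)
From Pilot Require Import Defs.
From Stdlib Require Import ZArith List Lia.
From mathcomp Require ssrbool ssrnat div prime.
Import ListNotations.
Open Scope Z_scope.

Lemma ele_refl (x : option Z) : ele x x.
Proof. destruct x; cbn [ele]; lia. Qed.

Lemma ele_trans (x y z : option Z) : ele x y -> ele y z -> ele x z.
Proof. destruct x, y, z; cbn [ele]; lia || tauto. Qed.

Lemma ele_total (x y : option Z) : ele x y \/ ele y x.
Proof. destruct x, y; cbn [ele]; lia || tauto. Qed.

Lemma eadd_mono (m m' n n' : option Z) :
  ele m m' -> ele n n' -> ele (eadd m n) (eadd m' n').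
Proof. destruct m, m', n, n'; cbn [ele eadd]; lia || tauto. Qed.

Lemma Z_of_nat_expn (p n : nat) :
  Z.of_nat (ssrnat.expn p n) = Z.of_nat p ^ Z.of_nat n.
Proof.
  induction n as [|n IH]; [reflexivity|].
  rewrite ssrnat.expnS, ssrnat.mulnE, Nat2Z.inj_mul, IH, Nat2Z.inj_succ.
  rewrite Z.pow_succ_r by lia. ring.
Qed.

Lemma dvdn_Z_divide (d m : nat) :
  div.dvdn d m = true <-> (Z.of_nat d | Z.of_nat m).
Proof.
  split.
  - intros [k ->]%(ssrbool.elimT div.dvdnP).
    exists (Z.of_nat k). rewrite ssrnat.mulnE. apply Nat2Z.inj_mul.
  - intros [q Hq]. apply (ssrbool.introT div.dvdnP). exists (Z.abs_nat q).
    rewrite ssrnat.mulnE, <- (Zabs2Nat.id m), Hq, Zabs2Nat.inj_mul, Zabs2Nat.id.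
    reflexivity.
Qed.

Lemma pi3_ge_iff (e x : Z) : ele (Some e) (pi3 x) <-> (3 ^ Z.max 0 e | x).
Proof.
  unfold pi3. destruct (Z.eqb_spec x 0) as [-> | Hx].
  - split; intros _; [apply Z.divide_0_r | exact I].
  - cbn [ele]. rewrite <- Z.divide_abs_r, <- Nat2Z.inj_abs_nat.
    replace (3 ^ Z.max 0 e) with (Z.of_nat (ssrnat.expn 3 (Z.to_nat (Z.max 0 e))))
      by (rewrite Z_of_nat_expn, Z2Nat.id by apply Z.le_max_l; reflexivity).
    rewrite <- dvdn_Z_divide, prime.pfactor_dvdn; [| reflexivity |].
    2: { apply (ssrbool.introT ssrnat.ltP), Nat2Z.inj_lt.
         rewrite Nat2Z.inj_abs_nat. lia. }
    split.
    + intros He. apply (ssrbool.introT ssrnat.leP). lia.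
    + intros He%(ssrbool.elimT ssrnat.leP). lia.
Qed.

Lemma pi3_top (x : Z) : ele None (pi3 x) <-> x = 0.
Proof. unfold pi3. destruct (Z.eqb_spec x 0); cbn [ele]; tauto. Qed.

Lemma ele_pi3_0 (m : option Z) : ele m (pi3 0).
Proof. destruct m; exact I. Qed.

Lemma pi3_opp (x : Z) : pi3 (- x) = pi3 x.
Proof. now destruct x. Qed.

Lemma pi3_ge_add (m : option Z) (x y : Z) :
  ele m (pi3 x) -> ele m (pi3 y) -> ele m (pi3 (x + y)).
Proof.
  destruct m as [e|].
  - rewrite !pi3_ge_iff. apply Z.divide_add_r.
  - rewrite !pi3_top. lia.
Qed.

Lemma pi3_ge_sub (m : option Z) (x y : Z) :
  ele m (pi3 x) -> ele m (pi3 y) -> ele m (pi3 (x - y)).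
Proof. rewrite <- (pi3_opp y). apply pi3_ge_add. Qed.

Lemma pi3_ge_mul (m n : option Z) (x y : Z) :
  ele m (pi3 x) -> ele n (pi3 y) -> ele (eadd m n) (pi3 (x * y)).
Proof.
  destruct m as [e|]; [destruct n as [f|]|].
  - cbn [eadd]. rewrite !pi3_ge_iff. intros Hx Hy.
    apply Z.divide_trans with (3 ^ Z.max 0 e * 3 ^ Z.max 0 f).
    + rewrite <- Z.pow_add_r by lia.
      exists (3 ^ (Z.max 0 e + Z.max 0 f - Z.max 0 (e + f))).
      rewrite <- Z.pow_add_r by lia. f_equal. lia.
    + destruct Hx as [u ->], Hy as [v ->]. exists (u * v). ring.
  - rewrite pi3_top. intros _ ->. rewrite Z.mul_0_r. apply ele_pi3_0.
  - rewrite pi3_top. intros -> _. apply ele_pi3_0.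
Qed.

Lemma pi3_mul_ge (x y : Z) : ele (eadd (pi3 x) (pi3 y)) (pi3 (x * y)).
Proof. apply pi3_ge_mul; apply ele_refl. Qed.

Lemma pi3_ge_sum (m : option Z) (g : nat -> Z) (l : list nat) :
  (forall k, In k l -> ele m (pi3 (g k))) ->
  ele m (pi3 (fold_right Z.add 0 (map g l))).
Proof.
  induction l as [|k l IH]; intros Hl; cbn [map fold_right].
  - apply ele_pi3_0.
  - apply pi3_ge_add; [apply Hl | apply IH; intros k' Hk'; apply Hl]; simpl; auto.
Qed.

Lemma ele_min_upto (f : nat -> option Z) (n : nat) :
  exists k0, (1 <= k0 <= S n)%nat /\
    forall k, (1 <= k <= S n)%nat -> ele (f k0) (f k).
Proof.
  induction n as [|n [k0 [Hk0 Hmin]]].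
  - exists 1%nat. split; [lia|]. intros k Hk. replace k with 1%nat by lia.
    apply ele_refl.
  - destruct (ele_total (f k0) (f (S (S n)))) as [Hle | Hle].
    + exists k0. split; [lia|]. intros k Hk.
      destruct (Nat.eq_dec k (S (S n))) as [->|]; [exact Hle | apply Hmin; lia].
    + exists (S (S n)). split; [lia|]. intros k Hk.
      destruct (Nat.eq_dec k (S (S n))) as [->|]; [apply ele_refl|].
      apply ele_trans with (f k0); [exact Hle | apply Hmin; lia].
Qed.

Lemma IsMinOver_exists (f : nat -> option Z) (N : nat) :
  (forall k, (N < k)%nat -> f k = None) -> exists m, IsMinOver f m.
Proof.
  intros Htop. destruct (ele_min_upto f N) as [k0 [Hk0 Hmin]].
  exists (f k0). split; [exists k0; split; [lia | reflexivity]|].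
  intros k Hk. destruct (Nat.le_gt_cases k (S N)).
  - apply Hmin. lia.
  - rewrite (Htop k) by lia. destruct (f k0); exact I.
Qed.

Lemma floor_sum_min (i j : Z) :
  IsMinOver (fun k => Some ((3 * Z.of_nat k - i - 1) / 2 + (3 * j - Z.of_nat k) / 2))
            (Some ((3 * Z.of_nat 1 - i - 1) / 2 + (3 * j - Z.of_nat 1) / 2)).
Proof.
  split; [exists 1%nat; split; [lia | reflexivity]|].
  intros k Hk. cbn [ele]. Z.div_mod_to_equations. lia.
Qed.

Definition row_support (i : Z) (r : Z -> Z) : Prop :=
  forall k, 3 * i < k -> r k = 0.

Definition row_pi3_bound (c i : Z) (r : Z -> Z) : Prop :=
  forall k, ele (Some ((3 * k - i - c) / 2)) (pi3 (r k)).

Lemma row_support_step (i : Z) (x y z : Z -> Z) :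
  row_support i x -> row_support (i + 1) y -> row_support (i + 2) z ->
  row_support (i + 3) (step x y z).
Proof.
  intros Hx Hy Hz k Hk. unfold step. destruct (k <=? 0); [reflexivity|].
  rewrite (Hz (k - 1)), (Hz (k - 2)), (Hz (k - 3)), (Hy (k - 1)), (Hy (k - 2)),
    (Hx (k - 1)) by lia.
  reflexivity.
Qed.

Lemma row_pi3_bound_step (c i : Z) (x y z : Z -> Z) :
  row_pi3_bound c i x -> row_pi3_bound c (i + 1) y -> row_pi3_bound c (i + 2) z ->
  row_pi3_bound c (i + 3) (step x y z).
Proof.
  intros Hx Hy Hz k. unfold step. destruct (k <=? 0); [apply ele_pi3_0|].
  set (E := (3 * k - (i + 3) - c) / 2).
  assert (Hterm : forall q v r e, 0 <= v -> (3 ^ v | q) ->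
            ele (Some e) (pi3 r) -> E <= v + e -> ele (Some E) (pi3 (q * r))).
  { intros q v r e Hv Hq Hr HE.
    apply ele_trans with (eadd (Some v) (Some e)); [cbn [ele eadd]; lia|].
    apply pi3_ge_mul; [apply pi3_ge_iff; now rewrite Z.max_r | exact Hr]. }
  repeat first [apply pi3_ge_sub | apply pi3_ge_add].
  - apply (Hterm 30 1 _ _ ltac:(lia) (ex_intro _ 10 eq_refl) (Hz (k - 1))).
    unfold E. Z.div_mod_to_equations. lia.
  - apply (Hterm 108 3 _ _ ltac:(lia) (ex_intro _ 4 eq_refl) (Hz (k - 2))).
    unfold E. Z.div_mod_to_equations. lia.
  - apply (Hterm 81 4 _ _ ltac:(lia) (ex_intro _ 1 eq_refl) (Hz (k - 3))).
    unfold E. Z.div_mod_to_equations. lia.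
  - apply (Hterm 12 1 _ _ ltac:(lia) (ex_intro _ 4 eq_refl) (Hy (k - 1))).
    unfold E. Z.div_mod_to_equations. lia.
  - apply (Hterm 9 2 _ _ ltac:(lia) (ex_intro _ 1 eq_refl) (Hy (k - 2))).
    unfold E. Z.div_mod_to_equations. lia.
  - apply ele_trans with (Some ((3 * (k - 1) - i - c) / 2)); [|apply Hx].
    cbn [ele]. unfold E. Z.div_mod_to_equations. lia.
Qed.

Lemma row_of_list_support (i : Z) (l : list Z) :
  Z.of_nat (length l) <= 3 * i -> row_support i (row_of_list l).
Proof.
  intros Hl k Hk. unfold row_of_list. destruct (k <=? 0); [reflexivity|].
  apply nth_overflow. lia.
Qed.

Lemma row_of_list_pi3_bound (c i : Z) (l : list Z) :
  forallb (fun n => nth (n - 1) l 0 mod 3 ^ Z.max 0 ((3 * Z.of_nat n - i - c) / 2) =? 0)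
          (seq 1 (length l)) = true ->
  row_pi3_bound c i (row_of_list l).
Proof.
  intros Hcheck k. unfold row_of_list. destruct (Z.leb_spec k 0); [apply ele_pi3_0|].
  destruct (Nat.lt_ge_cases (Z.to_nat (k - 1)) (length l)) as [Hin | Hout].
  - rewrite forallb_forall in Hcheck.
    specialize (Hcheck (Z.to_nat k) ltac:(apply in_seq; lia)).
    rewrite Z2Nat.id in Hcheck by lia.
    replace (Z.to_nat k - 1)%nat with (Z.to_nat (k - 1)) in Hcheck by lia.
    apply pi3_ge_iff, Z.mod_divide; [apply Z.pow_nonzero; lia|].
    now apply Z.eqb_eq.
  - rewrite nth_overflow by exact Hout. apply ele_pi3_0.
Qed.

Lemma mrow_ind (r1 r2 r3 : Z -> Z) (P : Z -> (Z -> Z) -> Prop) :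
  P 1 r1 -> P 2 r2 -> P 3 r3 ->
  (forall i x y z, P i x -> P (i + 1) y -> P (i + 2) z -> P (i + 3) (step x y z)) ->
  forall i : nat, (1 <= i)%nat -> P (Z.of_nat i) (mrow r1 r2 r3 i).
Proof.
  intros H1 H2 H3 Hstep.
  assert (Hiter : forall n : nat,
    let '(x, y, z) := Nat.iter n Defs.shift (r1, r2, r3) in
    P (Z.of_nat n + 1) x /\ P (Z.of_nat n + 1 + 1) y /\ P (Z.of_nat n + 1 + 2) z).
  { induction n as [|n IH]; [now repeat split|].
    change (Nat.iter (S n) Defs.shift (r1, r2, r3))
      with (Defs.shift (Nat.iter n Defs.shift (r1, r2, r3))).
    destruct (Nat.iter n Defs.shift (r1, r2, r3)) as [[x y] z].
    destruct IH as (Hx & Hy & Hz). cbn [Defs.shift].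
    pose proof (Hstep _ x y z Hx Hy Hz) as Hs.
    rewrite Nat2Z.inj_succ.
    replace (Z.succ (Z.of_nat n) + 1 + 1) with (Z.of_nat n + 1 + 2) by lia.
    replace (Z.succ (Z.of_nat n) + 1 + 2) with (Z.of_nat n + 1 + 3) by lia.
    auto. }
  intros i Hi. unfold mrow. specialize (Hiter (i - 1)%nat).
  destruct (Nat.iter (i - 1) Defs.shift (r1, r2, r3)) as [[x y] z].
  replace (Z.of_nat i) with (Z.of_nat (i - 1) + 1) by lia. tauto.
Qed.

Lemma a_support (i k : nat) : (1 <= i)%nat -> (3 * i < k)%nat -> a i k = 0.
Proof.
  intros Hi Hk. unfold a.
  apply (mrow_ind _ _ _ row_support); [| | | apply row_support_step | exact Hi | lia];
    apply row_of_list_support; simpl; lia.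
Qed.

Lemma a_pi3_bound (i k : nat) : (1 <= i)%nat ->
  ele (Some ((3 * Z.of_nat k - Z.of_nat i - 1) / 2)) (pi3 (a i k)).
Proof.
  intros Hi. unfold a.
  apply (mrow_ind _ _ _ (row_pi3_bound 1)); [| | | apply row_pi3_bound_step | exact Hi];
    apply row_of_list_pi3_bound; vm_compute; reflexivity.
Qed.

Lemma b_pi3_bound (k j : nat) : (1 <= k)%nat ->
  ele (Some ((3 * Z.of_nat j - Z.of_nat k) / 2)) (pi3 (b k j)).
Proof.
  intros Hk. unfold b. rewrite <- (Z.sub_0_r (_ - Z.of_nat k)).
  apply (mrow_ind _ _ _ (row_pi3_bound 0)); [| | | apply row_pi3_bound_step | exact Hk];
    apply row_of_list_pi3_bound; vm_compute; reflexivity.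
Qed.

Theorem corollary3p2 :
  forall i j : nat, (1 <= i)%nat -> (1 <= j)%nat ->
    (exists N : nat, forall k : nat, (N < k)%nat -> a i k = 0) /\
    (forall N : nat, (forall k : nat, (N < k)%nat -> a i k = 0) ->
      exists m1 m2 : option Z,
        IsMinOver (fun k => eadd (pi3 (a i k)) (pi3 (b k j))) m1 /\
        IsMinOver (fun k => Some ((3 * Z.of_nat k - Z.of_nat i - 1) / 2
                                  + (3 * Z.of_nat j - Z.of_nat k) / 2)) m2 /\
        ele m1 (pi3 (tN N i j)) /\
        ele m2 m1).
Proof.
  intros i j Hi _. split; [exists (3 * i)%nat; intros k; now apply a_support|].
  intros N HN.
  destruct (IsMinOver_exists (fun k => eadd (pi3 (a i k)) (pi3 (b k j))) N)
    as [m1 Hm1]; [intros k Hk; now rewrite HN|].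
  pose proof (floor_sum_min (Z.of_nat i) (Z.of_nat j)) as Hm2.
  exists m1. eexists. split; [exact Hm1|]. split; [exact Hm2|].
  destruct Hm1 as [[k0 [Hk0 <-]] Hmin]. split.
  - apply pi3_ge_sum. intros k Hk%in_seq.
    apply ele_trans with (eadd (pi3 (a i k)) (pi3 (b k j)));
      [apply Hmin; lia | apply pi3_mul_ge].
  - refine (ele_trans _ (eadd (Some _) (Some _)) _ (proj2 Hm2 k0 Hk0) _).
    apply eadd_mono; [now apply a_pi3_bound | now apply b_pi3_bound].
Qed.
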